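(* Assume Assumptions 1, 2, 3 (stated in the context). If Line-Search (Algorithm 3, described in the context), called with input point $\theta$, makes infinitely many calls to subdivision, then $\theta$ is unsafe; in other words, $\theta$ cannot pass the safety check (Algorithm 2) under any finite spatial-temporal subdivision.
   Context: Problem: for $\theta$ and $t\in[0,T]$, body $i$ occupies $b_i(t,\theta)\subset\mathbb{R}^3$, obstacles occupy $o$; $\text{dist}$ is the shortest Euclidean distance between sets; $d_0\ge0$; $\mathcal{O}(\theta)$ twice differentiable cost. Assumption 1: finite decompositions $b_i=\bigcup_j b_{ij}$, $o=\bigcup_k o_k$ with each $(t,\theta)\mapsto\text{dist}(b_{ij}(t,\theta),o_k)$ sufficiently smooth. Assumption 2: the feasible domain of $t,\theta$ is bounded. Assumption 3: $\mathcal{P}$ sufficiently smooth, monotonically decreasing on $(0,\infty)$, $\lim_{x\to0}\mathcal{P}=\infty$, $\lim_{x\to\infty}\mathcal{P}=0$, $\lim_{x\to0}x\mathcal{P}(x)=\infty$. $L_1$: a constant with $|\text{dist}(b_{ij}(t_1,\theta),o_k)-\text{dist}(b_{ij}(t_2,\theta),o_k)|\le L_1|t_1-t_2|$ for all arguments. $\mathcal{P}_{ijk}(t,\theta)=\mathcal{P}(\text{dist}(b_{ij}(t,\theta),o_k)-d_0)$; per triple $(i,j,k)$ a finite partition of $[0,T]$ into intervals $[T_0^l,T_1^l]$; subdividing $(i,j,k,l)$ replaces the interval by its two halves; $\mathcal{P}_{ijkl}(\theta)=\mathcal{P}_{ijk}((T_0^l+T_1^l)/2,\theta)$; $\mathcal{E}=\mathcal{O}+\mu\sum_{ijkl}(T_1^l-T_0^l)\mathcal{P}_{ijkl}$,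 $\mu>0$. Directions $d^{(1)}=-\nabla_\theta\mathcal{E}$ or $d^{(2)}=\mathcal{M}(\nabla^2_\theta\mathcal{E})^{-1}d^{(1)}$ with $\underline\beta I\preceq\mathcal{M}(H)\preceq\bar\beta I$. Wolfe: $\mathcal{E}(\theta+d\alpha)\le\mathcal{E}(\theta)+c\langle d\alpha,\nabla\mathcal{E}\rangle$, $c\in(0,1)$. Safety check (Algorithm 2) at $\theta$: $\psi(x)=L_1x/2+L_2x^\eta$ ($L_2,\eta>0$); return a tuple $(i,j,k,l)$ with $\text{dist}(b_{ij}((T_0^l+T_1^l)/2,\theta),o_k)\le d_0+\psi(T_1^l-T_0^l)$ if one exists, else None (then $\theta$ passes / is safe; otherwise unsafe). Line-Search$(\theta,d,\epsilon_\alpha)$ (Algorithm 3; $\alpha_0>0,\gamma\in(0,1)$): $\alpha=\alpha_0$; while $\theta+d\alpha$ fails the safety check or Wolfe: if the check returned $(i,j,k,l)$, then if $\alpha\le\epsilon_\alpha$: $\epsilon_\alpha\leftarrow\gamma\epsilon_\alpha$, subdivide $(i,j,k,l)$, re-evaluate $\mathcal{E}$, recompute $d$; else $\alpha\leftarrow\gamma\alpha$; if only Wolfe fails, $\alpha\leftarrow\gamma\alpha$. Return $\alpha,\epsilon_\alpha$. *)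

From HB Require Import structures.
From mathcomp Require Import all_boot all_order all_algebra.
From mathcomp Require Import all_classical all_reals all_analysis.
Import Order.TTheory GRing.Theory Num.Theory.
Import numFieldNormedType.Exports.

Set Implicit Arguments.
Unset Strict Implicit.
Unset Printing Implicit Defensive.

Local Open Scope classical_set_scope.
Local Open Scope ring_scope.

Section Defs.
Variable R : realType.

Definition eucl3 (x : 'rV[R]_3) : R := Num.sqrt (\sum_i x 0 i ^+ 2).

Definition setdist (A B : set 'rV[R]_3) : R :=
  inf [set r | exists x y, A x /\ B y /\ r = eucl3 (x - y)].

Definition iterD (V : normedModType R) (f : V -> R) (us : seq V) : V -> R :=
  foldr (fun u g => 'D_u g) f us.

(* "sufficiently smooth": C^infinity, i.e. all iterated directional
   derivatives exist everywhere and are continuous *)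
Definition smooth (V : normedModType R) (f : V -> R) : Prop :=
  forall us : seq V,
    continuous (iterD f us) /\ (forall u x, derivable (iterD f us) x u).

Definition smooth_pos (f : R -> R) : Prop :=
  forall (m : nat) (x : R), 0 < x ->
    derivable (derive1n m f) x 1 /\ {for x, continuous (derive1n m f)}.

Definition twice_diff (n : nat) (f : 'cV[R]_n -> R) : Prop :=
  forall (u v x : 'cV[R]_n), derivable f x u /\ derivable ('D_u f) x v.

Definition grad (n : nat) (f : 'cV[R]_n -> R) (x : 'cV[R]_n) : 'cV[R]_n :=
  \col_i 'D_(delta_mx i 0) f x.

Definition hess (n : nat) (f : 'cV[R]_n -> R) (x : 'cV[R]_n) : 'M[R]_n :=
  \matrix_(i, j) 'D_(delta_mx j 0) (fun y => 'D_(delta_mx i 0) f y) x.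

Definition inner (n : nat) (u v : 'cV[R]_n) : R := \sum_i u i 0 * v i 0.

Definition loewner_bounded (n : nat) (lo hi : R) (M : 'M[R]_n -> 'M[R]_n) :=
  forall H : 'M[R]_n, (M H)^T = M H /\
    forall x : 'cV[R]_n,
      lo * inner x x <= inner x (M H *m x) <= hi * inner x x.

Definition mid (iv : R * R) : R := (iv.1 + iv.2) / 2.
Definition width (iv : R * R) : R := iv.2 - iv.1.

(* s = [:: [T_0^0,T_1^0]; ...; [T_0^m,T_1^m]] is a finite partition of [0,T] *)
Definition is_partition (T : R) (s : seq (R * R)) : Prop :=
  [/\ s != [::],
      (head (0, 0) s).1 = 0,
      (last (0, 0) s).2 = T,
      (forall l, (l < size s)%N -> (nth (0, 0) s l).1 < (nth (0, 0) s l).2)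
    & (forall l, (l.+1 < size s)%N -> (nth (0, 0) s l).2 = (nth (0, 0) s l.+1).1)].

Definition split_interval (l : nat) (s : seq (R * R)) : seq (R * R) :=
  let iv := nth (0, 0) s l in
  take l s ++ [:: (iv.1, mid iv); (mid iv, iv.2)] ++ drop l.+1 s.

Section Pieces.
(* Pc : the body pieces b_{ij} (indexed by pairs (i,j)), K : obstacle pieces o_k *)
Variables (Pc K : finType) (n : nat).

(* a subdivision: for each triple (i,j,k) (= (p,k)), a list of intervals *)
Definition subdiv := Pc -> K -> seq (R * R).

Definition subdivide (S : subdiv) (p : Pc) (k : K) (l : nat) : subdiv :=
  fun p' k' => if (p' == p) && (k' == k) then split_interval l (S p k)
               else S p' k'.

(* Dist p k t theta = dist(b_{p}(t,theta), o_k) *)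
Variable Dist : Pc -> K -> R -> 'cV[R]_n -> R.

Definition energy (O : 'cV[R]_n -> R) (P : R -> R) (mu d0 : R) (S : subdiv)
  (theta : 'cV[R]_n) : R :=
  O theta + mu * \sum_(p : Pc) \sum_(k : K) \sum_(iv <- S p k)
                   width iv * P (Dist p k (mid iv) theta - d0).

Definition psi (L1 L2 eta x : R) : R := L1 * x / 2 + L2 * x `^ eta.

(* the tuple (i,j,k,l) = (p,k,l) witnesses failure of the safety check *)
Definition violates (d0 L1 L2 eta : R) (S : subdiv) (theta : 'cV[R]_n)
  (p : Pc) (k : K) (l : nat) : Prop :=
  (l < size (S p k))%N /\
  Dist p k (mid (nth (0, 0) (S p k) l)) theta
    <= d0 + psi L1 L2 eta (width (nth (0, 0) (S p k) l)).

(* theta passes the safety check (Algorithm 2 returns None) under S *)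
Definition passes (d0 L1 L2 eta : R) (S : subdiv) (theta : 'cV[R]_n) : Prop :=
  ~ exists p k l, violates d0 L1 L2 eta S theta p k l.

Definition direction (newton : bool) (M : 'M[R]_n -> 'M[R]_n)
  (f : 'cV[R]_n -> R) (theta : 'cV[R]_n) : 'cV[R]_n :=
  let d1 := - grad f theta in
  if newton then invmx (M (hess f theta)) *m d1 else d1.

Definition wolfe (c : R) (f : 'cV[R]_n -> R) (theta d : 'cV[R]_n) (alpha : R) :=
  f (theta + alpha *: d) <= f theta + c * inner (alpha *: d) (grad f theta).

Record ls_state := LSState {
  ls_S : subdiv; ls_alpha : R; ls_eps : R; ls_d : 'cV[R]_n }.

Section Step.
Variables (O : 'cV[R]_n -> R) (P : R -> R) (mu d0 L1 L2 eta c gamma : R)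
          (newton : bool) (M : 'M[R]_n -> 'M[R]_n) (theta : 'cV[R]_n).

Let E S := energy O P mu d0 S.
Let trial (s : ls_state) := theta + ls_alpha s *: ls_d s.

(* one loop iteration of Algorithm 3 that calls subdivision *)
Definition ls_sub_step (s s' : ls_state) : Prop :=
  exists p k l,
    violates d0 L1 L2 eta (ls_S s) (trial s) p k l /\
    ls_alpha s <= ls_eps s /\
    let S' := subdivide (ls_S s) p k l in
    s' = LSState S' (ls_alpha s) (gamma * ls_eps s)
                 (direction newton M (E S') theta).

Definition ls_shrink_step (s s' : ls_state) : Prop :=
  ((exists p k l, violates d0 L1 L2 eta (ls_S s) (trial s) p k l) /\
     ls_eps s < ls_alpha s
   \/ passes d0 L1 L2 eta (ls_S s) (trial s) /\
      ~ wolfe c (E (ls_S s)) theta (ls_d s) (ls_alpha s)) /\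
  s' = LSState (ls_S s) (gamma * ls_alpha s) (ls_eps s) (ls_d s).

Definition ls_step (s s' : ls_state) : Prop :=
  ls_sub_step s s' \/ ls_shrink_step s s'.

(* an infinite (non-terminating) execution of the while loop of
   Line-Search(theta, d_in, eps_in) started from subdivision S0 *)
Definition ls_run (alpha0 : R) (S0 : subdiv) (d_in : 'cV[R]_n) (eps_in : R)
  (run : nat -> ls_state) : Prop :=
  run 0%N = LSState S0 alpha0 eps_in d_in /\
  forall m, ls_step (run m) (run m.+1).

Definition infinitely_many_subdivisions (run : nat -> ls_state) : Prop :=
  forall N, exists m, (N <= m)%N /\ ls_sub_step (run m) (run m.+1).

End Step.
End Pieces.
End Defs.

From HB Require Import structures.
From mathcomp Require Import all_boot all_order all_algebra.
From mathcomp Require Import all_classical all_reals all_analysis.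
From mathcomp Require Import zify ring lra.
Import Order.TTheory GRing.Theory Num.Theory.
Import numFieldNormedType.Exports.

Set Implicit Arguments.
Unset Strict Implicit.
Unset Printing Implicit Defensive.

Local Open Scope classical_set_scope.
Local Open Scope ring_scope.

(* Suppose [theta] passed the safety check under some partition.  Every [t] lies within
   half a width of a checked midpoint, so the Lipschitz bound in [t] leaves a uniform
   margin: [dist > d0 + dl] on [[0, T]].  By continuity in [theta] (uniform in [t] through a
   finite grid) [dist > d0 + dl/2] persists near [theta], and since [psi x -> 0] as [x -> 0],
   every interval on which a nearby point fails the check is wider than some [w > 0].
   Along the run, a subdivision needs [alpha <= eps] and multiplies [eps] by [gamma], while
   the search directions stay bounded independently of the subdivision: the penalty is only
   differentiated where [dist - d0] ranges over a compact subset of [(0, +oo)], and [M] is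
   uniformly coercive.  So the trial points eventually stay near [theta], and from then on
   every subdivision halves an interval of width at least [w].  Such halvings decrease the
   nonnegative, nonincreasing potential [subdiv_potential w] by one, so there cannot be
   infinitely many of them. *)

Section Bounds.
Variable R : realType.

Lemma seq_pos_lb (s : seq R) : {in s, forall x, 0 < x} ->
  exists2 e, 0 < e & {in s, forall x, e <= x}.
Proof.
elim: s => [|y s IH] s_pos; first by exists 1.
have [|e e_gt0 e_le] := IH; first by move=> x xs; apply: s_pos; rewrite in_cons xs orbT.
exists (Num.min y e) => [|x]; first by rewrite lt_min e_gt0 s_pos ?mem_head.
by rewrite in_cons => /predU1P[->|/e_le]; rewrite ge_min ?lexx // => ->; rewrite orbT.
Qed.

Lemma fin_ub (F : finType) (f : F -> R) : exists2 M, 0 <= M & forall x, f x <= M.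
Proof.
exists (\sum_x `|f x|) => [|x]; first exact: sumr_ge0.
rewrite (bigD1 x) //=.
by apply: le_trans (ler_norm _) _; rewrite lerDl sumr_ge0.
Qed.

Lemma lipschitz_const_ge0 (f : R -> R) (L a b : R) :
  a != b -> `|f a - f b| <= L * `|a - b| -> 0 <= L.
Proof.
rewrite -subr_eq0 -normr_gt0 => ab_gt0 /(le_trans (normr_ge0 _)).
by rewrite pmulr_lge0.
Qed.

Lemma fine_grid (T L e : R) : 0 < T -> 0 <= L -> 0 < e ->
  exists N : nat, L * (T / N.+1%:R) <= e.
Proof.
move=> T_gt0 L_ge0 e_gt0; have LTe_ge0 : 0 <= L * T / e.
  by rewrite divr_ge0 ?mulr_ge0 ?(ltW T_gt0) ?(ltW e_gt0).
exists (Num.Def.archi_bound (L * T / e)); set N := Num.Def.archi_bound _.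
have := archi_boundP LTe_ge0; rewrite -/N ltr_pdivrMr // => LT_lt.
rewrite mulrA ler_pdivrMr // -natr1; nra.
Qed.

Lemma grid_cover (N : nat) (h t : R) : 0 < h -> 0 <= t <= N%:R * h ->
  exists2 j, (j <= N)%N & `|t - j%:R * h| <= h.
Proof.
move=> h_gt0; elim: N t => [|N IH] t /andP[t_ge0 t_le].
  by exists 0%N => //; rewrite mul0r subr0 ger0_norm //; lra.
case: (leP t (N%:R * h)) => t_N.
  by have [|j jN ?] := IH t; [rewrite t_ge0 t_N | exists j => //; exact: leqW].
exists N.+1 => //; rewrite -natr1 in t_le *; rewrite ler_norml; apply/andP; split; nra.
Qed.

Lemma nonincreasing_unit_descent (u : nat -> R) :
  (forall m, 0 <= u m) -> (forall m, u m.+1 <= u m) ->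
  ~ (forall N, exists2 m, (N <= m)%N & u m.+1 <= u m - 1).
Proof.
move=> u_ge0 u_step drops; have /nonincreasing_seqP u_mono := u_step.
suff [m u_m] : exists m, u m <= u 0%N - (Num.Def.archi_bound (u 0%N))%:R.
  have := archi_boundP (u_ge0 0%N); have := u_ge0 m; lra.
elim: (Num.Def.archi_bound _) => [|j [m u_m]]; first by exists 0%N; rewrite subr0.
have [m' mm' drop] := drops m; exists m'.+1.
by have := u_mono _ _ mm'; rewrite -natr1; lra.
Qed.

End Bounds.

Section Partitions.
Variable R : realType.
Local Notation iv0 := ((0 : R), (0 : R)).

Lemma mid_bounds (iv : R * R) : iv.1 < iv.2 -> iv.1 < mid iv < iv.2.
Proof. by case: iv => a b /= ab; rewrite /mid /=; apply/andP; split; lra. Qed.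

Lemma chain_width_sum (s : seq (R * R)) : s != [::] ->
  (forall l, (l.+1 < size s)%N -> (nth iv0 s l).2 = (nth iv0 s l.+1).1) ->
  \sum_(iv <- s) width iv = (last iv0 s).2 - (head iv0 s).1.
Proof.
elim: s => [//|x [|y s] IH] _ s_link; first by rewrite big_seq1.
rewrite big_cons IH // => [|l]; last exact: (s_link l.+1).
by have /= := s_link 0%N erefl; rewrite /width => ->; ring.
Qed.

Section Partition.
Variables (T : R) (s : seq (R * R)).
Hypothesis s_part : is_partition T s.

Lemma partition_nth_ge0 l : (l < size s)%N -> 0 <= (nth iv0 s l).1.
Proof.
have [_ s_head _ s_lt s_link] := s_part.
elim: l => [|l IH] ls; first by rewrite nth0 s_head.
by rewrite -s_link //; apply: le_trans (IH _) (ltW (s_lt _ _)); lia.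
Qed.

Lemma partition_nth_leT l : (l < size s)%N -> (nth iv0 s l).2 <= T.
Proof.
have [s_ne _ s_last s_lt s_link] := s_part.
suff from_end j l' : (l' + j = (size s).-1)%N -> (nth iv0 s l').2 <= T.
  by move=> ls; apply: (from_end ((size s).-1 - l)%N); lia.
have s_gt0 : (0 < size s)%N by rewrite lt0n size_eq0.
elim: j l' => [|j IH] l' l'j; first by rewrite addn0 in l'j; rewrite l'j nth_last s_last.
by rewrite s_link; [apply: le_trans (ltW (s_lt _ _)) (IH _ _)|..]; lia.
Qed.

Lemma partition_mem iv : iv \in s -> [/\ 0 <= iv.1, iv.1 < iv.2 & iv.2 <= T].
Proof.
case/(nthP iv0) => l ls <-; have [_ _ _ s_lt _] := s_part.
by split; [exact: partition_nth_ge0 | exact: s_lt | exact: partition_nth_leT].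
Qed.

Lemma partition_width_gt0 iv : iv \in s -> 0 < width iv.
Proof. by case/partition_mem => _ ab _; rewrite /width subr_gt0. Qed.

Lemma partition_mid iv : iv \in s -> 0 <= mid iv <= T.
Proof.
case/partition_mem => a0 /mid_bounds/andP[m1 m2] bT.
by apply/andP; split; lra.
Qed.

Lemma partition_cover t : 0 <= t <= T ->
  exists2 iv, iv \in s & `|t - mid iv| <= width iv / 2.
Proof.
have [s_ne s_head s_last s_lt s_link] := s_part; case/andP=> t0 tT.
suff [l ls /andP[t1 t2]] :
    exists2 l, (l < size s)%N & (nth iv0 s l).1 <= t <= (nth iv0 s l).2.
  exists (nth iv0 s l); first exact: mem_nth.
  by rewrite ler_norml /mid /width; apply/andP; split; lra.
have s_gt0 : (0 < size s)%N by rewrite lt0n size_eq0.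
suff scan l : (l < size s)%N -> (exists2 l', (l' < size s)%N &
    (nth iv0 s l').1 <= t <= (nth iv0 s l').2) \/ (nth iv0 s l).2 < t.
  case: (scan (size s).-1) => [|//|]; first lia.
  by rewrite nth_last s_last => /(le_lt_trans tT); rewrite ltxx.
elim: l => [|l IH] ls.
  case: (leP t (nth iv0 s 0).2) => t_le; last by right.
  by left; exists 0%N => //; rewrite t_le nth0 s_head t0.
case: IH => [|found|t_gt]; [lia | by left |].
case: (leP t (nth iv0 s l.+1).2) => t_le; last by right.
by left; exists l.+1 => //; rewrite t_le -s_link // ltW.
Qed.

Lemma partition_width_sum : \sum_(iv <- s) width iv = T.
Proof.
have [s_ne s_head s_last _ s_link] := s_part.
by rewrite chain_width_sum // s_last s_head subr0.
Qed.

End Partition.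

Lemma size_split_interval (s : seq (R * R)) l : (l < size s)%N ->
  size (split_interval l s) = (size s).+1.
Proof. by move=> ls; rewrite /split_interval !size_cat size_take ls /= size_drop; lia. Qed.

Lemma nth_split_interval (s : seq (R * R)) l i : (l < size s)%N ->
  nth iv0 (split_interval l s) i =
  if (i < l)%N then nth iv0 s i
  else if i == l then ((nth iv0 s l).1, mid (nth iv0 s l))
  else if i == l.+1 then (mid (nth iv0 s l), (nth iv0 s l).2)
  else nth iv0 s i.-1.
Proof.
move=> ls; rewrite /split_interval nth_cat size_take ls.
case: ltnP => il; first by rewrite nth_take.
case: eqP => [->|ne]; first by rewrite subnn.
case: eqP => [->|ne2]; first by rewrite subSnn.
have -> : (i - l = (i - l - 2).+2)%N by lia.
by rewrite /= nth_drop; congr nth; lia.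
Qed.

Lemma partition_split_interval T (s : seq (R * R)) l :
  is_partition T s -> (l < size s)%N -> is_partition T (split_interval l s).
Proof.
move=> s_part ls; have [s_ne s_head s_last s_lt s_link] := s_part.
have /andP[m1 m2] := mid_bounds (s_lt l ls).
have size_s := size_split_interval ls; have nth_s i := nth_split_interval i ls.
split.
- by rewrite -size_eq0 size_s.
- by rewrite -nth0 nth_s; case: l ls {m1 m2 nth_s size_s} => [|l] _; rewrite /= nth0.
- rewrite -nth_last size_s nth_s /= ltnNge ltnW //=.
  have -> : (size s == l) = false by apply/eqP; lia.
  case: eqP => [E|_]; last by rewrite nth_last s_last.
  by rewrite -s_last -nth_last E.
- move=> i; rewrite size_s nth_s => isz.
  case: ltnP => il; first by apply: s_lt; lia.
  by do 2 case: eqP => // _; apply: s_lt; lia.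
- move=> i; rewrite size_s !nth_s => isz.
  case: (ltnP i.+1 l) => il; first by rewrite ltnW //; apply: s_link; lia.
  case: (ltnP i l) => il2.
    have Ei : l = i.+1 by lia.
    by rewrite Ei eqxx /=; apply: s_link; lia.
  have [->|ne] := eqVneq i l.
    by rewrite eqxx (_ : (l.+1 == l) = false) //=; apply/eqP; lia.
  have [->|ne2] := eqVneq i l.+1.
    have -> : (l.+2 == l) = false by apply/eqP; lia.
    have -> : (l.+2 == l.+1) = false by apply/eqP; lia.
    by apply: s_link; lia.
  have -> : (i.+1 == l) = false by apply/eqP; lia.
  have -> : (i.+1 == l.+1) = false by apply/eqP; lia.
  have -> : i = i.-1.+1 by lia.
  by apply: s_link; lia.
Qed.

Lemma partition_subdivide (Pc K : finType) T (S : subdiv R Pc K) p k l :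
  (forall p k, is_partition T (S p k)) -> (l < size (S p k))%N ->
  forall p' k', is_partition T (subdivide S p k l p' k').
Proof.
move=> S_part ls p' k'; rewrite /subdivide.
by case: andP => _; [exact: partition_split_interval | exact: S_part].
Qed.

Lemma partition_min_width (Pc K : finType) T (S : subdiv R Pc K) :
  (forall p k, is_partition T (S p k)) ->
  exists2 w : R, 0 < w & forall p k iv, iv \in S p k -> w <= width iv.
Proof.
move=> S_part.
pose all_ivs := flatten [seq S x.1 x.2 | x <- enum {: Pc * K}].
have mem_all p k iv : iv \in S p k -> width iv \in [seq width iv | iv <- all_ivs].
  move=> ivS; apply: map_f; apply/flattenP; exists (S p k) => //.
  by apply/mapP; exists (p, k); rewrite ?mem_enum.
have [|w w_gt0 w_le] := @seq_pos_lb _ [seq width iv | iv <- all_ivs].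
  move=> _ /mapP[iv /flattenP[_ /mapP[[p k] _ ->] ivS] ->].
  exact: (@partition_width_gt0 _ _ (S_part p k) iv ivS).
by exists w => // p k iv /mem_all/w_le.
Qed.

End Partitions.

Section Potential.
Variable R : realType.
Local Notation iv0 := ((0 : R), (0 : R)).

(* [2 x / w - 1] bounds the number of halvings of pieces of width at least [w] that a piece
   of width [x] can undergo. *)
Definition halving_potential (w x : R) : R := if x < w then 0 else 2 * x / w - 1.

Definition subdiv_potential (Pc K : finType) (w : R) (S : subdiv R Pc K) : R :=
  \sum_p \sum_k \sum_(iv <- S p k) halving_potential w (width iv).
Arguments subdiv_potential {Pc K}.

Lemma halving_potential_ge0 (w x : R) : 0 < w -> 0 <= halving_potential w x.
Proof.
move=> w_gt0; rewrite /halving_potential; case: ltP => // wx.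
have -> : 2 * x / w - 1 = (2 * x - w) / w by field; lra.
by rewrite divr_ge0 //; lra.
Qed.

Lemma halving_potential_half (w x : R) : 0 < w ->
  2 * halving_potential w (x / 2) + (if w <= x then 1 else 0) <= halving_potential w x.
Proof.
move=> w_gt0; rewrite /halving_potential.
have -> : 2 * (x / 2) / w = x / w by field; lra.
have -> : 2 * x / w = 2 * (x / w) by rewrite mulrA.
have -> : (w <= x) = (1 <= x / w) by rewrite ler_pdivlMr // mul1r.
have -> : (x / 2 < w) = (x / w < 2).
  by rewrite ltr_pdivrMr // mulrC -ltr_pdivrMr // mulrC.
have -> : (x < w) = (x / w < 1) by rewrite ltr_pdivrMr // mul1r.
by case: (ltP (x / w) 2); case: (ltP (x / w) 1); case: leP; lra.
Qed.

Lemma sum_split_interval (f : R -> R) (s : seq (R * R)) l : (l < size s)%N ->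
  \sum_(iv <- split_interval l s) f (width iv) =
  \sum_(iv <- s) f (width iv) - f (width (nth iv0 s l)) + 2 * f (width (nth iv0 s l) / 2).
Proof.
move=> ls; have s_eq : s = take l s ++ nth iv0 s l :: drop l.+1 s.
  by rewrite -drop_nth // cat_take_drop.
rewrite {2}s_eq /split_interval !big_cat !big_cons big_nil /=.
have half1 : width ((nth iv0 s l).1, mid (nth iv0 s l)) = width (nth iv0 s l) / 2.
  by rewrite /width /mid /=; field.
have half2 : width (mid (nth iv0 s l), (nth iv0 s l).2) = width (nth iv0 s l) / 2.
  by rewrite /width /mid /=; field.
rewrite half1 half2; lra.
Qed.

Lemma subdiv_potential_ge0 (Pc K : finType) (w : R) (S : subdiv R Pc K) :
  0 < w -> 0 <= subdiv_potential w S.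
Proof. by move=> w_gt0; do 3 (apply: sumr_ge0 => ? _); exact: halving_potential_ge0. Qed.

Lemma ler_sum_bigD1 (I : finType) (F G : I -> R) i0 c :
  (forall i, i != i0 -> G i = F i) -> G i0 <= F i0 - c ->
  \sum_i G i <= \sum_i F i - c.
Proof.
move=> GF Gi0; rewrite (bigD1 i0) //= [\sum_i F i](bigD1 i0) //=.
have -> : \sum_(i | i != i0) G i = \sum_(i | i != i0) F i by apply: eq_bigr.
lra.
Qed.

Lemma subdiv_potential_subdivide (Pc K : finType) (w : R) (S : subdiv R Pc K) p k l :
  0 < w -> (l < size (S p k))%N ->
  subdiv_potential w (subdivide S p k l) <=
    subdiv_potential w S - (if w <= width (nth iv0 (S p k) l) then 1 else 0).
Proof.
move=> w_gt0 ls; rewrite /subdiv_potential !pair_big.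
apply: (@ler_sum_bigD1 _ _ _ (p, k)) => [[p' k'] ne|].
  rewrite /subdivide /=; case: andP => // -[/eqP Ep /eqP Ek].
  by rewrite Ep Ek eqxx in ne.
rewrite /subdivide !eqxx sum_split_interval // -[(p, k).1]/p -[(p, k).2]/k.
have := halving_potential_half (width (nth iv0 (S p k) l)) w_gt0.
by set c := (if _ then _ else _); lra.
Qed.

End Potential.

Section LineDerivatives.
Variable R : realType.

Lemma line_quotientE (V : normedModType R) (f : V -> R) a v :
  (fun h : R => h^-1 *: ((f \o shift a) (h *: v) - f a)) =
  (fun h : R => h^-1 *: (((fun s : R => f (a + s *: v)) \o shift 0) (h *: 1) -
                         f (a + 0 *: v))).
Proof.
apply: funext => h /=; rewrite addr0 scale0r addr0 (addrC a).
by rewrite [h *: 1]mulr1.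
Qed.

Lemma derive_lineE (V : normedModType R) (f : V -> R) a v :
  'D_v f a = 'D_1 (fun h : R => f (a + h *: v)) 0.
Proof. by rewrite /derive line_quotientE. Qed.

Lemma derivable_lineP (V : normedModType R) (f : V -> R) a v :
  derivable f a v <-> derivable (fun h : R => f (a + h *: v)) 0 1.
Proof. by rewrite /derivable line_quotientE. Qed.

Lemma sum_is_derive_bounded (T : eqType) (r : seq T) (f : T -> R -> R) (C : T -> R) :
  (forall x, x \in r -> exists D, is_derive (0 : R) 1 (f x) D /\ `|D| <= C x) ->
  exists D, is_derive (0 : R) 1 (fun h => \sum_(x <- r) f x h) D /\
            `|D| <= \sum_(x <- r) C x.
Proof.
elim: r => [|y r IH] df_le.
  exists 0; rewrite big_nil normr0; split => //.
  by under eq_fun do rewrite big_nil; exact: is_derive_cst.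
have [Dy [dy Dy_le]] := df_le y (mem_head _ _).
have [|D [dD D_le]] := IH; first by move=> x xr; apply: df_le; rewrite in_cons xr orbT.
exists (Dy + D); split; last by rewrite big_cons (le_trans (ler_normD _ _)) ?lerD.
by under eq_fun do rewrite big_cons; exact: is_deriveD.
Qed.

End LineDerivatives.

Section PenaltyDerivatives.
Variables (R : realType) (n : nat).

Lemma penalty_is_derive (G : R * 'cV[R]_n -> R) (P : R -> R) d0 t th e :
  smooth G -> smooth_pos P -> d0 < G (t, th) ->
  is_derive (0 : R) 1 (fun h : R => P (G (t, th + h *: e) - d0))
    (derive1 P (G (t, th) - d0) * 'D_((0 : R), e) G (t, th)).
Proof.
move=> G_smooth P_smooth Gd0.
have line_eq : (fun h : R => G ((t, th) + h *: ((0 : R), e))) =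
               (fun h : R => G (t, th + h *: e)).
  by apply: funext => h; congr G; congr (_, _) => /=; rewrite scaler0 addr0.
have dG0 : is_derive (0 : R) 1 (fun h : R => G (t, th + h *: e))
                     ('D_((0 : R), e) G (t, th)).
  have := derivableP ((derivable_lineP G (t, th) ((0 : R), e)).1 ((G_smooth [::]).2 _ _)).
  by rewrite -derive_lineE line_eq.
have dG := is_deriveB dG0 (is_derive_cst d0 (0 : R) (1 : R)); rewrite subr0 in dG.
have dP : is_derive (G (t, th + 0 *: e) - d0) 1 P (derive1 P (G (t, th) - d0)).
  rewrite scale0r addr0 derive1E; apply: derivableP.
  by apply: (P_smooth 0%N _ _).1; rewrite subr_gt0.
exact: (@is_derive1_comp _ P (fun h => G (t, th + h *: e) - d0) 0 _ _ dP dG).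
Qed.

Lemma energy_derive_bounded (Pc K : finType) (Dist : Pc -> K -> R -> 'cV[R]_n -> R)
    (O : 'cV[R]_n -> R) (P : R -> R) (mu d0 T C : R) (th e : 'cV[R]_n) :
  0 <= mu -> derivable O th e ->
  (forall p k t, 0 <= t <= T -> exists D,
      is_derive (0 : R) 1 (fun h : R => P (Dist p k t (th + h *: e) - d0)) D /\ `|D| <= C) ->
  forall S : subdiv R Pc K, (forall p k, is_partition T (S p k)) ->
  `|'D_e (energy Dist O P mu d0 S) th| <=
     `|'D_e O th| + mu * \sum_(p : Pc) \sum_(k : K) (T * C).
Proof.
move=> mu_ge0 dO dpenalty S S_part.
have [D [dD D_le]] : exists D, is_derive (0 : R) 1 (fun h : R =>
    \sum_p \sum_k \sum_(iv <- S p k) width iv * P (Dist p k (mid iv) (th + h *: e) - d0)) D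
    /\ `|D| <= \sum_(p : Pc) \sum_(k : K) (T * C).
  apply: sum_is_derive_bounded => p _; apply: sum_is_derive_bounded => k _.
  rewrite -(partition_width_sum (S_part p k)) mulr_suml.
  apply: sum_is_derive_bounded => iv ivS.
  have [D [dD D_le]] := dpenalty p k (mid iv) (partition_mid (S_part p k) ivS).
  have w_ge0 := ltW (partition_width_gt0 (S_part p k) ivS).
  exists (width iv *: D); split; first exact: (is_deriveZ (width iv) dD).
  by rewrite normrM ger0_norm // ler_wpM2l.
have dE : is_derive (0 : R) 1 (fun h : R => energy Dist O P mu d0 S (th + h *: e))
    ('D_1 (fun h : R => O (th + h *: e)) 0 + mu *: D).
  have -> : (fun h : R => energy Dist O P mu d0 S (th + h *: e)) =
      (fun h : R => O (th + h *: e)) + mu \*: (fun h : R => \sum_p \sum_k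
        \sum_(iv <- S p k) width iv * P (Dist p k (mid iv) (th + h *: e) - d0)).
    by apply: funext.
  have dOline : is_derive (0 : R) 1 (fun h : R => O (th + h *: e))
                     ('D_1 (fun h : R => O (th + h *: e)) 0).
    exact: derivableP ((derivable_lineP O th e).1 dO).
  exact: is_deriveD dOline (is_deriveZ mu dD).
rewrite derive_lineE (@derive_val _ _ _ _ _ _ _ dE) -derive_lineE.
by rewrite (le_trans (ler_normD _ _)) // lerD // normrZ ger0_norm // ler_wpM2l.
Qed.

End PenaltyDerivatives.

Section Directions.
Variables (R : realType) (n : nat).
Implicit Types (x y : 'cV[R]_n) (A : 'M[R]_n).

Lemma inner_ge0 x : 0 <= inner x x.
Proof. by apply: sumr_ge0 => i _; rewrite -expr2 sqr_ge0. Qed.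

Lemma sqr_le_inner x i : x i 0 ^+ 2 <= inner x x.
Proof.
rewrite /inner (bigD1 i) //= expr2 lerDl.
by apply: sumr_ge0 => j _; rewrite -expr2 sqr_ge0.
Qed.

Lemma inner_le_sqr_bound x B : (forall i, `|x i 0| <= B) -> inner x x <= n%:R * B ^+ 2.
Proof.
move=> x_le; have -> : n%:R * B ^+ 2 = \sum_(i < n) B ^+ 2.
  by rewrite sumr_const card_ord mulr_natl.
apply: ler_sum => i _.
rewrite -expr2 -real_normK ?num_real // lerXn2r ?nnegrE ?x_le //.
exact: le_trans (x_le i).
Qed.

Lemma coercive_unitmx A lo : 0 < lo ->
  (forall y, lo * inner y y <= inner y (A *m y)) -> A \in unitmx.
Proof.
move=> lo_gt0 A_coer; rewrite unitmxE unitfE -det_tr; apply/negP => /det0P[v v_neq0 vA].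
have Av : A *m v^T = 0 by apply: trmx_inj; rewrite trmx_mul trmxK vA trmx0.
have : lo * inner v^T v^T <= 0.
  apply: le_trans (A_coer _) _; rewrite Av /inner big1 // => i _.
  by rewrite !mxE mulr0.
rewrite pmulr_rle0 // => v_le0; move/negP: v_neq0; apply; apply/eqP/rowP => j.
have := le_trans (sqr_le_inner v^T j) v_le0; rewrite !mxE => vj_le0.
by apply/eqP; rewrite -sqrf_eq0 eq_le vj_le0 sqr_ge0.
Qed.

Lemma coercive_sqr_inner_le A lo y : 0 < lo ->
  (forall y, lo * inner y y <= inner y (A *m y)) ->
  lo ^+ 2 * inner y y <= inner (A *m y) (A *m y).
Proof.
move=> lo_gt0 A_coer; have := A_coer y.
have amgm : 2 * lo * inner y (A *m y) <= lo ^+ 2 * inner y y + inner (A *m y) (A *m y).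
  rewrite /inner !mulr_sumr -big_split /=; apply: ler_sum => j _.
  by rewrite -subr_ge0 (_ : _ - _ = (lo * y j 0 - (A *m y) j 0) ^+ 2) ?sqr_ge0 //; ring.
nra.
Qed.

Lemma coercive_solution_bound A lo x B : 0 < lo ->
  (forall y, lo * inner y y <= inner y (A *m y)) -> 0 <= B ->
  (forall i, `|x i 0| <= B) -> forall i, `|(invmx A *m x) i 0| <= (n%:R + 1) * B / lo.
Proof.
move=> lo_gt0 A_coer B_ge0 x_le i; set y := invmx A *m x.
have Ay : A *m y = x by rewrite mulKVmx // (coercive_unitmx lo_gt0 A_coer).
have := coercive_sqr_inner_le y lo_gt0 A_coer; rewrite Ay => y_le.
have := inner_le_sqr_bound x_le; have := sqr_le_inner y i; have := inner_ge0 y.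
move=> y_ge0 yi_le x_le_sqr.
have : (lo * `|y i 0|) ^+ 2 <= ((n%:R + 1) * B) ^+ 2.
  rewrite exprMn real_normK ?num_real //; have : 0 <= n%:R :> R by []; nra.
move=> sq_le; rewrite ler_pdivlMr // [_ * lo]mulrC.
rewrite -(@ler_pXn2r _ 2) ?nnegrE // mulr_ge0 // ?ltW // addr_ge0.
Qed.

Lemma cV_norm_le x B : 0 <= B -> (forall i, `|x i 0| <= B) -> `|x| <= B.
Proof.
move=> B_ge0 x_le; rewrite [`|x|]mx_normrE; elim/big_ind: _ => //.
  by move=> a b a_le b_le; rewrite ge_max a_le b_le.
by move=> [i j] _ /=; rewrite (ord1 j).
Qed.

Lemma direction_norm_le newton M lo hi (f : 'cV[R]_n -> R) th B :
  0 < lo -> loewner_bounded lo hi M -> 0 <= B ->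
  (forall i, `|'D_(delta_mx i 0) f th| <= B) ->
  `|direction newton M f th| <= (n%:R + 1) * B / lo + B.
Proof.
move=> lo_gt0 M_bnd B_ge0 df_le.
have grad_le i : `|(- grad f th) i 0| <= B by rewrite !mxE normrN; apply: df_le.
have newton_ge0 : 0 <= (n%:R + 1) * B / lo.
  by rewrite divr_ge0 ?mulr_ge0 ?(ltW lo_gt0) // addr_ge0.
apply: cV_norm_le => [|i]; first exact: addr_ge0.
rewrite /direction; case: newton; last by rewrite (le_trans (grad_le i)) ?lerDr.
have M_coer y : lo * inner y y <= inner y (M (hess f th) *m y).
  by have [_ /(_ y)/andP[]] := M_bnd (hess f th).
by rewrite (le_trans (coercive_solution_bound lo_gt0 M_coer B_ge0 grad_le i)) ?lerDl.
Qed.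

End Directions.

Lemma continuous_pair_l (U V W : topologicalType) (G : U * V -> W) v :
  continuous G -> continuous (fun u => G (u, v)).
Proof.
move=> G_cont u; apply: (continuous_comp (f := fun u => (u, v))); last exact: G_cont.
by apply: (@cvg_pair _ _ _ (nbhs u) (nbhs u) (nbhs v) _ _ _ id (fun=> v));
  [exact: cvg_id | exact: cvg_cst].
Qed.

Lemma continuous_pair_r (U V W : topologicalType) (G : U * V -> W) u :
  continuous G -> continuous (fun v => G (u, v)).
Proof.
move=> G_cont v; apply: (continuous_comp (f := fun v => (u, v))); last exact: G_cont.
by apply: (@cvg_pair _ _ _ (nbhs v) (nbhs u) (nbhs v) _ _ _ (fun=> u) id);
  [exact: cvg_cst | exact: cvg_id].
Qed.

Section Margins.
Variables (R : realType) (Pc K : finType) (n : nat).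
Variable Dist : Pc -> K -> R -> 'cV[R]_n -> R.
Variables (T d0 L1 L2 eta : R).

(* The Lipschitz drift from a midpoint, [L1 width / 2], is the first term of [psi]; the
   margin comes from the second one, [L2 width ^ eta], and the minimal width. *)
Lemma passes_margin (S : subdiv R Pc K) th : 0 < L2 -> 0 < eta ->
  (forall p k (t1 t2 : R), 0 <= t1 <= T -> 0 <= t2 <= T ->
     `|Dist p k t1 th - Dist p k t2 th| <= L1 * `|t1 - t2|) ->
  (forall p k, is_partition T (S p k)) -> passes Dist d0 L1 L2 eta S th ->
  exists2 dl : R, 0 < dl & forall p k t, 0 <= t <= T -> d0 + dl < Dist p k t th.
Proof.
move=> L2_gt0 eta_gt0 lip S_part th_safe.
have [w w_gt0 w_le] := partition_min_width S_part.
exists (L2 * w `^ eta) => [|p k t tT]; first by rewrite mulr_gt0 ?powR_gt0.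
have [iv ivS t_near] := partition_cover (S_part p k) tT.
have [iv1_ge0 iv_lt iv2_le] := partition_mem (S_part p k) ivS.
have mid_T := partition_mid (S_part p k) ivS.
have L1_ge0 : 0 <= L1.
  apply: (@lipschitz_const_ge0 _ (fun t => Dist p k t th) _ iv.1 iv.2).
    by rewrite lt_eqF.
  by apply: lip; apply/andP; split => //; lra.
have safe_mid : d0 + psi L1 L2 eta (width iv) < Dist p k (mid iv) th.
  rewrite ltNge; apply/negP => unsafe; apply: th_safe.
  have /(nthP (0, 0))[l ls iv_eq] := ivS.
  by exists p, k, l; rewrite /violates iv_eq.
have wpow_le : L2 * w `^ eta <= L2 * width iv `^ eta.
  apply: ler_wpM2l; first exact: ltW.
  have width_gt0 := partition_width_gt0 (S_part p k) ivS.
  by apply: ge0_ler_powR; rewrite ?nnegrE; try exact: ltW; exact: w_le ivS.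
have := lip p k t (mid iv) tT mid_T; have := ler_norm (Dist p k (mid iv) th - Dist p k t th).
rewrite distrC; have : L1 * `|t - mid iv| <= L1 * (width iv / 2) by rewrite ler_wpM2l.
move: safe_mid; rewrite /psi; lra.
Qed.

(* Lipschitz continuity in [t] reduces uniformity over [[0, T]] to finitely many grid times
   of spacing [h], chosen with [|L1| h <= dl / 4]. *)
Lemma margin_near (dl : R) th : 0 < T -> 0 < dl ->
  (forall p k th' (t1 t2 : R), 0 <= t1 <= T -> 0 <= t2 <= T ->
     `|Dist p k t1 th' - Dist p k t2 th'| <= L1 * `|t1 - t2|) ->
  (forall p k t, continuous (Dist p k t)) ->
  (forall p k (t : R), 0 <= t <= T -> d0 + dl < Dist p k t th) ->
  exists2 r : R, 0 < r & forall th', `|th - th'| < r ->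
    forall p k t, 0 <= t <= T -> d0 + dl / 2 < Dist p k t th'.
Proof.
move=> T_gt0 dl_gt0 lip Dist_cont margin.
have dl4_gt0 : 0 < dl / 4 by lra.
have [N Lh_le] := fine_grid T_gt0 (normr_ge0 L1) dl4_gt0.
set h := T / N.+1%:R in Lh_le.
have h_gt0 : 0 < h by rewrite divr_gt0.
have NhT : N.+1%:R * h = T by rewrite /h mulrC divfK.
pose tj (j : 'I_N.+2) := (j : nat)%:R * h.
have tj_T j : 0 <= tj j <= T.
  rewrite /tj mulr_ge0 ?(ltW h_gt0) //= -NhT ler_wpM2r ?(ltW h_gt0) // ler_nat.
  by rewrite -ltnS ltn_ord.
have near_th : \forall th' \near th, forall x : Pc * K * 'I_N.+2,
    `|Dist x.1.1 x.1.2 (tj x.2) th - Dist x.1.1 x.1.2 (tj x.2) th'| < dl / 4.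
  apply: (@filter_forall _ _ (fun x th' =>
    `|Dist x.1.1 x.1.2 (tj x.2) th - Dist x.1.1 x.1.2 (tj x.2) th'| < dl / 4) (nbhs th) _)
    => -[[p k] j].
  by move/cvgrPdist_lt: (Dist_cont p k (tj j) th); apply; lra.
have [r r_gt0 r_near] := (nbhs_normP _ _).1 near_th.
exists r => // th' th_near p k t tT.
have t_grid : 0 <= t <= N.+1%:R * h by rewrite NhT.
have [j jN t_near] := grid_cover h_gt0 t_grid.
pose jo := Ordinal (jN : (j < N.+2)%N).
have near_jo := r_near th' th_near (p, k, jo); have margin_jo := margin p k _ (tj_T jo).
have := lip p k th' t (tj jo) tT (tj_T jo).
have : L1 * `|t - tj jo| <= `|L1| * h.
  by rewrite (le_trans (ler_wpM2r (normr_ge0 _) (ler_norm L1))) // ler_wpM2l.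
move: near_jo margin_jo; rewrite /tj /=.
set a := Dist p k _ th; set b := Dist p k _ th'; set c := Dist p k t th'.
have := ler_norm (a - b); have := ler_norm (b - c); rewrite [`|b - c|]distrC; lra.
Qed.

Lemma psi_small (dl : R) : 0 < L2 -> 0 < eta -> 0 < dl ->
  exists2 w : R, 0 < w & forall x, 0 < x -> x < w -> psi L1 L2 eta x < dl / 2.
Proof.
move=> L2_gt0 eta_gt0 dl_gt0.
set w1 := dl / (4 * (`|L1| + 1)); set w2 := (dl / (8 * L2)) `^ eta^-1.
have w1_gt0 : 0 < w1 by rewrite divr_gt0 // mulr_gt0 // ltr_wpDl.
have w2_gt0 : 0 < w2 by rewrite powR_gt0 // divr_gt0 // mulr_gt0.
have L1w1_le : `|L1| * w1 <= dl / 4.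
  rewrite /w1 mulrA ler_pdivrMr ?mulr_gt0 ?ltr_wpDl // mulrC; nra.
have w2_pow : w2 `^ eta = dl / (8 * L2).
  by rewrite /w2 -powRrM mulVf ?gt_eqF // powRr1 // ltW // divr_gt0 // mulr_gt0.
exists (Num.min w1 w2) => [|x x_gt0]; first by rewrite lt_min w1_gt0 w2_gt0.
rewrite lt_min => /andP[x_w1 x_w2]; rewrite /psi.
have : L1 * x <= `|L1| * w1.
  apply: le_trans (ler_wpM2r (ltW x_gt0) (ler_norm L1)) _.
  by apply: ler_wpM2l => //; exact: ltW.
have xpow_le : x `^ eta <= dl / (8 * L2).
  by rewrite -w2_pow; apply: ge0_ler_powR; rewrite ?nnegrE; try exact: ltW.
have : L2 * x `^ eta <= dl / 8.
  have -> : dl / 8 = L2 * (dl / (8 * L2)) by field; lra.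
  by rewrite ler_pM2l.
lra.
Qed.

Lemma violation_width_ge (S : subdiv R Pc K) (dl w : R) th p k l :
  (forall p k, is_partition T (S p k)) ->
  (forall p k (t : R), 0 <= t <= T -> d0 + dl / 2 < Dist p k t th) ->
  (forall x, 0 < x -> x < w -> psi L1 L2 eta x < dl / 2) ->
  violates Dist d0 L1 L2 eta S th p k l -> w <= width (nth (0, 0) (S p k) l).
Proof.
move=> S_part margin psi_lt [ls unsafe]; rewrite leNgt; apply/negP => narrow.
have ivS := mem_nth (0, 0) ls.
have := margin p k _ (partition_mid (S_part p k) ivS).
have := psi_lt _ (partition_width_gt0 (S_part p k) ivS) narrow; lra.
Qed.

End Margins.

Section DirectionBound.
Variables (R : realType) (Pc K : finType) (n : nat).
Variables (Dist : Pc -> K -> R -> 'cV[R]_n -> R) (O : 'cV[R]_n -> R) (P : R -> R).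
Variables (mu d0 T : R) (th : 'cV[R]_n).
Hypotheses (P_smooth : smooth_pos P)
  (Dist_smooth : forall p k, smooth (fun z : R * 'cV[R]_n => Dist p k z.1 z.2))
  (Dist_gt : forall p k t, 0 <= t <= T -> d0 < Dist p k t th).

Lemma penalty_slope_bounded p k e : 0 <= T -> exists C, forall t, 0 <= t <= T ->
  `|derive1 P (Dist p k t th - d0) *
    'D_((0 : R), e) (fun z : R * 'cV[R]_n => Dist p k z.1 z.2) (t, th)| <= C.
Proof.
move=> T_ge0; pose slope t := `|derive1 P (Dist p k t th - d0) *
  'D_((0 : R), e) (fun z : R * 'cV[R]_n => Dist p k z.1 z.2) (t, th)|.
suff [c _ c_max] : exists2 c, c \in `[0, T] & forall t, t \in `[0, T] -> slope t <= slope c.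
  by exists (slope c) => t tT; apply: c_max; rewrite in_itv.
apply: EVT_max => //; apply: continuous_in_subspaceT => t; rewrite inE /= in_itv /= => tT.
have dist_cont : {for t, continuous (fun t => Dist p k t th - d0)}.
  apply: (@cvgB _ _ _ _ _ (fun t => Dist p k t th) (cst d0)); last exact: cvg_cst.
  exact: (continuous_pair_l (v := th) (Dist_smooth p k [::]).1).
have P'_cont : {for Dist p k t th - d0, continuous (derive1 P)}.
  have dist_gt0 : 0 < Dist p k t th - d0 by rewrite subr_gt0 Dist_gt.
  exact: (P_smooth 1%N dist_gt0).2.
have dDist_cont := continuous_pair_l (v := th) (Dist_smooth p k [:: ((0 : R), e)]).1.
exact: cvg_norm (continuousM (continuous_comp dist_cont P'_cont) (dDist_cont t)).
Qed.

Lemma direction_bounded (lo hi : R) newton (M : 'M[R]_n -> 'M[R]_n) :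
  0 <= T -> 0 <= mu -> 0 < lo -> loewner_bounded lo hi M ->
  (forall e, derivable O th e) ->
  exists B, forall S : subdiv R Pc K, (forall p k, is_partition T (S p k)) ->
    `|direction newton M (energy Dist O P mu d0 S) th| <= B.
Proof.
move=> T_ge0 mu_ge0 lo_gt0 M_bnd dO.
have [C C_ge0 C_bnd] : exists2 C, 0 <= C & forall (x : Pc * K * 'I_n) t, 0 <= t <= T ->
    `|derive1 P (Dist x.1.1 x.1.2 t th - d0) * 'D_((0 : R), delta_mx x.2 0)
        (fun z : R * 'cV[R]_n => Dist x.1.1 x.1.2 z.1 z.2) (t, th)| <= C.
  have [Cx Cx_bnd] := choice (fun x : Pc * K * 'I_n =>
    penalty_slope_bounded x.1.1 x.1.2 (delta_mx x.2 0) T_ge0).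
  have [C C_ge0 Cx_le] := fin_ub Cx.
  by exists C => // x t tT; rewrite (le_trans (Cx_bnd x t tT)).
set B0 := \sum_i `|'D_(delta_mx i 0) O th| + mu * \sum_(p : Pc) \sum_(k : K) (T * C).
have B0_ge0 : 0 <= B0.
  apply: addr_ge0; first exact: sumr_ge0.
  by apply: mulr_ge0 => //; do 2 (apply: sumr_ge0 => ? _); exact: mulr_ge0.
exists ((n%:R + 1) * B0 / lo + B0) => S S_part.
apply: direction_norm_le => // i.
apply: le_trans (energy_derive_bounded mu_ge0 (dO _) _ S_part) _ => [p k t tT|].
  exists (derive1 P (Dist p k t th - d0) * 'D_((0 : R), delta_mx i 0)
           (fun z : R * 'cV[R]_n => Dist p k z.1 z.2) (t, th)).
  by split; [exact: penalty_is_derive (Dist_gt p k tT) | exact: (C_bnd (p, k, i))].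
by rewrite lerD2r (bigD1 i) //= lerDl sumr_ge0.
Qed.

End DirectionBound.

Section LineSearchRun.
Variables (R : realType) (Pc K : finType) (n : nat).
Variables (Dist : Pc -> K -> R -> 'cV[R]_n -> R) (O : 'cV[R]_n -> R) (P : R -> R).
Variables (mu d0 L1 L2 eta c gamma T alpha0 eps_in B : R) (newton : bool).
Variables (M : 'M[R]_n -> 'M[R]_n) (theta d_in : 'cV[R]_n) (S0 : subdiv R Pc K).
Variable run : nat -> ls_state R Pc K n.
Hypotheses (gamma_gt0 : 0 < gamma) (gamma_lt1 : gamma < 1) (alpha0_gt0 : 0 < alpha0)
  (S0_part : forall p k, is_partition T (S0 p k))
  (direction_le : forall S : subdiv R Pc K, (forall p k, is_partition T (S p k)) ->
     `|direction newton M (energy Dist O P mu d0 S) theta| <= B)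
  (run_start : run 0%N = LSState S0 alpha0 eps_in d_in)
  (run_step : forall m, ls_step Dist O P mu d0 L1 L2 eta c gamma newton M theta
                                (run m) (run m.+1))
  (run_subdivides : infinitely_many_subdivisions Dist O P mu d0 L1 L2 eta gamma newton M
                      theta run).

Local Notation S_ m := (ls_S (run m)).
Local Notation alpha_ m := (ls_alpha (run m)).
Local Notation eps_ m := (ls_eps (run m)).
Local Notation d_ m := (ls_d (run m)).
Local Notation trial m := (theta + alpha_ m *: d_ m).

Lemma run_step_cases m :
  (exists p k l, [/\ violates Dist d0 L1 L2 eta (S_ m) (trial m) p k l,
     alpha_ m <= eps_ m &
     run m.+1 = LSState (subdivide (S_ m) p k l) (alpha_ m) (gamma * eps_ m)
       (direction newton M (energy Dist O P mu d0 (subdivide (S_ m) p k l)) theta)]) \/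
  run m.+1 = LSState (S_ m) (gamma * alpha_ m) (eps_ m) (d_ m).
Proof.
case: (run_step m) => [[p [k [l [v_pkl [a_le ->]]]]]|[_ ->]]; last by right.
by left; exists p, k, l.
Qed.

Lemma run_partition m p k : is_partition T (S_ m p k).
Proof.
elim: m p k => [|m IH] p k; first by rewrite run_start.
case: (run_step_cases m) => [[p' [k' [l' [[ls _] _ ->]]]]|->] //=.
exact: partition_subdivide.
Qed.

Lemma run_alpha_gt0 m : 0 < alpha_ m.
Proof.
elim: m => [|m IH]; first by rewrite run_start.
by case: (run_step_cases m) => [[p [k [l [_ _ ->]]]]|->] //=; rewrite mulr_gt0.
Qed.

Lemma run_direction_le m : `|d_ m| <= Num.max B `|d_in|.
Proof.
elim: m => [|m IH]; first by rewrite run_start le_max lexx orbT.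
case: (run_step_cases m) => [[p [k [l [[ls _] _ ->]]]]|->] //=.
by rewrite le_max direction_le // => p' k'; apply: partition_subdivide => //; exact: run_partition.
Qed.

(* [0 < eps_in] is not assumed: it is forced by any subdivision step, which needs
   [0 < alpha <= eps]. *)
Lemma run_eps_gt0 m : 0 < eps_ m.
Proof.
have eps_step k : eps_ k.+1 = eps_ k \/ eps_ k.+1 = gamma * eps_ k.
  by case: (run_step_cases k) => [[p [q [l [_ _ ->]]]]|->]; [right | left].
have eps_in_gt0 : 0 < eps_in.
  rewrite ltNge; apply/negP => eps_in_le0.
  have eps_le0 k : eps_ k <= 0.
    elim: k => [|k IH]; first by rewrite run_start.
    by case: (eps_step k) => ->; rewrite ?pmulr_rle0.
  have [k [_ [p [q [l [_ [a_le _]]]]]]] := run_subdivides 0%N.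
  by have := run_alpha_gt0 k; have := eps_le0 k; lra.
elim: m => [|m IH]; first by rewrite run_start.
by case: (eps_step m) => ->; rewrite ?mulr_gt0.
Qed.

Lemma run_eps_eventually_lt (r : R) : 0 < r -> exists N, forall m, (N <= m)%N -> eps_ m < r.
Proof.
move=> r_gt0; have eps_in_gt0 : 0 < eps_in by have := run_eps_gt0 0; rewrite run_start.
have /nonincreasing_seqP eps_mono : forall m, eps_ m.+1 <= eps_ m.
  move=> m; case: (run_step_cases m) => [[p [k [l [_ _ ->]]]]|->] //=.
  by rewrite ler_piMl ?ltW ?run_eps_gt0.
have eps_pow j : exists N, eps_ N <= eps_in * gamma ^+ j.
  elim: j => [|j [N eps_N]]; first by exists 0%N; rewrite run_start expr0 mulr1.
  have [m [Nm [p [k [l [_ [_ run_next]]]]]]] := run_subdivides N.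
  exists m.+1; rewrite run_next /= exprS mulrCA ler_pM2l //.
  exact: le_trans (eps_mono _ _ Nm) eps_N.
have [j pow_lt] : exists j, eps_in * gamma ^+ j < r.
  have /cvg_expr/cvgrPdist_lt/(_ (r / eps_in)) : `|gamma| < 1 by rewrite gtr0_norm.
  case=> [|N _ near_N]; first by rewrite divr_gt0.
  exists N; rewrite mulrC -ltr_pdivlMr //.
  by have := near_N N (leqnn N); rewrite sub0r normrN => /(le_lt_trans (ler_norm _)).
have [N eps_N] := eps_pow j; exists N => m Nm.
exact: le_lt_trans (eps_mono _ _ Nm) (le_lt_trans eps_N pow_lt).
Qed.

Lemma run_trial_eventually_near (r : R) : 0 < r ->
  exists N, forall m, (N <= m)%N -> alpha_ m <= eps_ m -> `|theta - trial m| < r.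
Proof.
move=> r_gt0; set D := Num.max B `|d_in|.
have D_ge0 : 0 <= D by rewrite le_max normr_ge0 orbT.
have rD_gt0 : 0 < r / (D + 1) by rewrite divr_gt0 // ltr_wpDl.
have [N eps_lt] := run_eps_eventually_lt rD_gt0.
exists N => m Nm a_le.
rewrite opprD addrA subrr add0r normrN normrZ gtr0_norm ?run_alpha_gt0 //.
have := eps_lt m Nm; rewrite ltr_pdivlMr ?ltr_wpDl // => eps_D.
have := run_direction_le m; have := run_alpha_gt0 m; rewrite -/D; nra.
Qed.

Lemma run_violations_not_wide (r w : R) : 0 < r -> 0 < w ->
  ~ (forall th', `|theta - th'| < r -> forall (S : subdiv R Pc K) p k l,
       (forall p k, is_partition T (S p k)) -> violates Dist d0 L1 L2 eta S th' p k l ->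
       w <= width (nth (0, 0) (S p k) l)).
Proof.
move=> r_gt0 w_gt0 wide; have [N near] := run_trial_eventually_near r_gt0.
apply: (@nonincreasing_unit_descent _ (fun m => subdiv_potential w (S_ m))) => [m|m|N'].
- exact: subdiv_potential_ge0.
- case: (run_step_cases m) => [[p [k [l [[ls _] _ ->]]]]|->] //=.
  rewrite (le_trans (subdiv_potential_subdivide w_gt0 ls)) //.
  by rewrite lerBlDr lerDl; case: ifP.
have [m [Nm [p [k [l [v_pkl [a_le run_next]]]]]]] := run_subdivides (maxn N N').
exists m; first exact: leq_trans (leq_maxr _ _) Nm.
rewrite run_next /= (le_trans (subdiv_potential_subdivide w_gt0 v_pkl.1)) //.
rewrite (wide _ (near m _ a_le) _ _ _ _ (@run_partition m) v_pkl) //.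
exact: leq_trans (leq_maxl _ _) Nm.
Qed.

End LineSearchRun.

Theorem lemma6
  (R : realType) (n : nat) (I Pc K : finType) (owner : Pc -> I)
  (* bodies b_i, their pieces b_ij (= b p), obstacles o and pieces o_k *)
  (bI : I -> R -> 'cV[R]_n -> set 'rV[R]_3)
  (b : Pc -> R -> 'cV[R]_n -> set 'rV[R]_3)
  (o : set 'rV[R]_3) (ok : K -> set 'rV[R]_3)
  (T d0 mu L1 L2 eta c gamma alpha0 lo hi : R)
  (O : 'cV[R]_n -> R) (P : R -> R) (M : 'M[R]_n -> 'M[R]_n) (newton : bool)
  (* Assumption 1 *)
  (Hdecb : forall i t th, bI i t th = \bigcup_(p in [set p | owner p = i]) b p t th)
  (Hdeco : o = \bigcup_(k in [set: K]) ok k)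
  (Hsmooth : forall p k,
      smooth (fun z : R * 'cV[R]_n => setdist (b p z.1 z.2) (ok k)))
  (* Assumption 3 *)
  (HPsmooth : smooth_pos P)
  (HPdec : forall x y, 0 < x -> x < y -> P y < P x)
  (HP0 : P x @[x --> 0^'+] --> +oo)
  (HPoo : P x @[x --> +oo] --> 0)
  (HxP0 : x * P x @[x --> 0^'+] --> +oo)
  (* standing data *)
  (HT : 0 < T) (Hd0 : 0 <= d0) (HO : twice_diff O) (Hmu : 0 < mu)
  (HL1 : forall p k th t1 t2, 0 <= t1 <= T -> 0 <= t2 <= T ->
      `|setdist (b p t1 th) (ok k) - setdist (b p t2 th) (ok k)|
        <= L1 * `|t1 - t2|)
  (HL2 : 0 < L2) (Heta : 0 < eta)
  (HM : 0 < lo) (Hlohi : lo <= hi) (HMb : loewner_bounded lo hi M)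
  (Hc : 0 < c < 1) (Hgamma : 0 < gamma < 1) (Halpha0 : 0 < alpha0)
  (* input of Line-Search *)
  (theta d_in : 'cV[R]_n) (eps_in : R) (S0 : subdiv R Pc K)
  (HS0 : forall p k, is_partition T (S0 p k))
  (run : nat -> ls_state R Pc K n)
  (Hrun : ls_run (fun p k t th => setdist (b p t th) (ok k))
            O P mu d0 L1 L2 eta c gamma newton M theta alpha0 S0 d_in eps_in run)
  (Hinf : infinitely_many_subdivisions
            (fun p k t th => setdist (b p t th) (ok k))
            O P mu d0 L1 L2 eta gamma newton M theta run) :
  forall S : subdiv R Pc K, (forall p k, is_partition T (S p k)) ->
    ~ passes (fun p k t th => setdist (b p t th) (ok k)) d0 L1 L2 eta S theta.
Proof.
move=> S S_part theta_safe; have /andP[gamma_gt0 gamma_lt1] := Hgamma.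
pose dist p k t th := setdist (b p t th) (ok k).
have dist_cont p k t : continuous (dist p k t).
  exact: (continuous_pair_r (u := t) (Hsmooth p k [::]).1).
have [dl dl_gt0 margin] := passes_margin HL2 Heta (fun p k => HL1 p k theta) S_part theta_safe.
have [r r_gt0 margin_near_theta] := margin_near HT dl_gt0 HL1 dist_cont margin.
have [w w_gt0 psi_lt] := psi_small L1 HL2 Heta dl_gt0.
have dist_gt p k t : 0 <= t <= T -> d0 < dist p k t theta.
  by move=> /(margin p k); apply: le_lt_trans; rewrite lerDl ltW.
have [B direction_le] := direction_bounded (Dist := dist) HPsmooth Hsmooth dist_gt newton
  (ltW HT) (ltW Hmu) HM HMb (fun e => (HO e e theta).1).
have [run_start run_step] := Hrun.
apply: (run_violations_not_wide gamma_gt0 gamma_lt1 Halpha0 HS0 direction_le run_start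
  run_step Hinf r_gt0 w_gt0) => th' th'_near S' p k l S'_part.
exact: violation_width_ge S'_part (margin_near_theta th' th'_near) psi_lt.
Qed.
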